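(* Let $a_0,a_1,b_0,b_1$ be real numbers such that $a(N)=a_1N+a_0>0$ and $b(N)=b_1N+b_0>0$ for all positive integers $N$, and let $k\ge1$ be an integer. Define the polynomial in $N$ $$\mathcal N_k(N):=\sum_{i=0}^{k-1}(-1)^i\binom{k-1}{i}\prod_{j=-k+1}^{-i-1}(2N+a(N)+b(N)+j-2)\prod_{j=-i}^{k-1-i}(N+j)(N+a(N)+j-1)\prod_{j=k-i}^{k-1}(2N+a(N)+b(N)+j-2).$$ Then the degree of $\mathcal N_k(N)$ in $N$ is $2k$.
   Context: Empty products equal $1$. *)

From mathcomp Require Import all_boot all_order all_algebra.
From mathcomp Require Import all_classical all_reals.
Set Implicit Arguments. Unset Strict Implicit. Unset Printing Implicit Defensive.
Import Order.TTheory GRing.Theory Num.Theory.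
Local Open Scope ring_scope.

Definition zprod (R : nzRingType) (m n : int) (F : int -> R) : R :=
  if (m <= n)%R then \prod_(t < absz (n - m + 1)) F (m + (t : nat)%:Z) else 1.

Definition calN (R : realType) (a0 a1 b0 b1 : R) (k : nat) : {poly R} :=
  let aP := a1%:P * 'X + a0%:P in
  let bP := b1%:P * 'X + b0%:P in
  let S (j : int) : {poly R} := 2%:R * 'X + aP + bP + j%:~R - 2%:R in
  \sum_(i < k)
    ((-1) ^+ i * ('C(k.-1, i))%:R *
     zprod (- (k%:Z) + 1) (- (i%:Z) - 1) S *
     zprod (- (i%:Z)) (k%:Z - 1 - i%:Z)
       (fun j => ('X + j%:~R) * ('X + aP + j%:~R - 1)) *
     zprod (k%:Z - i%:Z) (k%:Z - 1) S).

From mathcomp Require Import all_boot all_order all_algebra.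
From mathcomp Require Import all_classical all_reals.
From mathcomp Require Import zify ring lra.
Import Order.TTheory GRing.Theory Num.Theory.
Local Open Scope ring_scope.
Set Implicit Arguments. Unset Strict Implicit. Unset Printing Implicit Defensive.

(* Write k = n + 1.  Each summand of N_k is a product of 3n + 2 linear factors,
   so the coefficient of N^(3n+2-s) is the coefficient of X^s in the summand with
   every factor aN + b reversed into a + bX.  The i-th reversed summand is an
   i-independent product of 2n + 1 factors, times 2(n + 1) factors depending
   linearly on i, divided by the n + 1 factors of the range it omits.  Expanding
   those inverses as geometric series modulo X^(n+1) shows that for s <= n its
   X^s-coefficient is a polynomial of degree at most s in i.  The alternating
   binomial sum over i is an n-th finite difference: it kills these polynomials
   for s < n and, for s = n, returns (-1)^n n! times the X^n-coefficient of
   T = c^(2n+1) (1 - X)^(n+1) (d - X)^(n+1) / (c - X)^(n+1), with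
   c = 2 + a1 + b1 and d = 1 + a1.  Hence deg N_k <= 2k, with equality iff
   [X^n] T <> 0.  The substitution X = cY / (1 + Y) turns [X^n] T into a multiple
   of [Y^n] (1 + (1 - c) Y)^(n+1) (d + (d - c) Y)^(n+1) / (1 + Y)^2, a product of
   series with alternating signs since a1, b1 >= 0; its sign is (-1)^n. *)

Definition lin (R : comNzRingType) (a b : R) : {poly R} := a%:P + b *: 'X.

Section GradedFamilies.
Variable R : comNzRingType.
Local Notation P := {poly R}.

Lemma coefM_top (p q : P) a b : (size p <= a.+1)%N -> (size q <= b.+1)%N ->
  (p * q)`_(a + b) = p`_a * q`_b.
Proof.
move=> sp sq; have ha : (a < (a + b).+1)%N by rewrite ltnS leq_addr.
rewrite coefM (bigD1 (Ordinal ha)) //= addKn big1 ?addr0 // => j /eqP nj.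
case: (ltngtP j a) => h.
- rewrite [q`__]nth_default ?mulr0 //; apply: (leq_trans sq); lia.
- by rewrite nth_default ?mul0r //; apply: (leq_trans sp).
- by case: nj; apply: val_inj.
Qed.

Lemma size_sum_leq n (F : 'I_n -> P) m :
  (forall j, (size (F j) <= m)%N) -> (size (\sum_(j < n) F j)%R <= m)%N.
Proof.
move=> H; apply: (big_ind (fun p : P => size p <= m)%N) => //.
  by rewrite size_poly0.
by move=> x y hx hy; apply: (leq_trans (size_polyD _ _)); rewrite geq_max hx hy.
Qed.

(* [t] collects the top coefficients in i: they are all that survives an n-th
   finite difference. *)
Definition graded (K : nat) (f : nat -> P) (t : P) :=
  exists Q : nat -> P, forall s, (s < K)%N ->
    [/\ (size (Q s) <= s.+1)%N, (Q s)`_s = t`_s & forall i, (f i)`_s = (Q s).[i%:R]].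

Lemma graded_eq K (f g : nat -> P) t :
  (forall i s, (s < K)%N -> (f i)`_s = (g i)`_s) -> graded K f t -> graded K g t.
Proof.
move=> e [Q H]; exists Q => s sK; have [a b c] := H s sK; split => // i.
by rewrite -e.
Qed.

Lemma graded1 K : graded K (fun _ => 1) 1.
Proof.
exists (fun s => ((1 : P)`_s)%:P) => s sK; split.
- exact: leq_trans (size_polyC_leq1 _) _.
- by rewrite coefC; case: s {sK} => //= n; rewrite coef1.
- by move=> i; rewrite hornerC.
Qed.

Lemma gradedD K f g tf tg : graded K f tf -> graded K g tg ->
  graded K (fun i => f i + g i) (tf + tg).
Proof.
case=> Q1 H1 [Q2 H2]; exists (fun s => Q1 s + Q2 s) => s sK.
have [a1 b1 c1] := H1 s sK; have [a2 b2 c2] := H2 s sK; split.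
- by apply: (leq_trans (size_polyD _ _)); rewrite geq_max a1 a2.
- by rewrite !coefD b1 b2.
- by move=> i; rewrite coefD hornerD c1 c2.
Qed.

Lemma gradedZ K f t (a : R) : graded K f t -> graded K (fun i => a *: f i) (a *: t).
Proof.
case=> Q H; exists (fun s => a *: Q s) => s sK.
have [a1 b1 c1] := H s sK; split.
- exact: (leq_trans (size_scale_leq _ _)).
- by rewrite !coefZ b1.
- by move=> i; rewrite coefZ hornerZ c1.
Qed.

(* The degree bound s on the s-th coefficient is what makes products work: only
   the pairs (j, s - j) of top coefficients contribute to the i^s-coefficient. *)
Lemma gradedM K f g tf tg : graded K f tf -> graded K g tg ->
  graded K (fun i => f i * g i) (tf * tg).
Proof.
case=> Q1 H1 [Q2 H2].
exists (fun s => \sum_(j < s.+1) Q1 j * Q2 (s - j)%N) => s sK.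
have HA (j : 'I_s.+1) : (j < K)%N by apply: leq_ltn_trans sK; rewrite -ltnS.
have HB (j : 'I_s.+1) : (s - j < K)%N by apply: leq_ltn_trans sK; rewrite leq_subr.
split.
- apply: size_sum_leq => j.
  have [s1 _ _] := H1 j (HA j); have [s2 _ _] := H2 _ (HB j).
  apply: (leq_trans (size_polyMleq _ _)); have := ltn_ord j; lia.
- rewrite coef_sum coefM; apply: eq_bigr => j _.
  have [s1 t1 _] := H1 j (HA j); have [s2 t2 _] := H2 _ (HB j).
  have := coefM_top s1 s2; rewrite subnKC ?(ltnSE (ltn_ord j)) // => ->.
  by rewrite t1 t2.
- move=> i; rewrite coefM horner_sum; apply: eq_bigr => j _.
  have [_ _ e1] := H1 j (HA j); have [_ _ e2] := H2 _ (HB j).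
  by rewrite hornerM e1 e2.
Qed.

Lemma graded_prod K n (F : 'I_n -> nat -> P) (T : 'I_n -> P) :
  (forall j, graded K (F j) (T j)) ->
  graded K (fun i => \prod_(j < n) F j i) (\prod_(j < n) T j).
Proof.
elim: n F T => [|n IH] F T H.
  under eq_fun do rewrite big_ord0.
  by rewrite big_ord0; apply: graded1.
under eq_fun do rewrite big_ord_recr.
by rewrite big_ord_recr; apply: gradedM (H _); apply: IH.
Qed.

Lemma graded_sum K n (F : 'I_n -> nat -> P) (T : 'I_n -> P) :
  (forall j, graded K (F j) (T j)) ->
  graded K (fun i => \sum_(j < n) F j i) (\sum_(j < n) T j).
Proof.
elim: n F T => [|n IH] F T H.
  under eq_fun do rewrite big_ord0 -(scale0r (1 : P)).
  by rewrite big_ord0 -(scale0r (1 : P)); apply/gradedZ/graded1.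
under eq_fun do rewrite big_ord_recr.
by rewrite big_ord_recr; apply: gradedD (H _); apply: IH.
Qed.

Lemma graded_exp K f t r : graded K f t -> graded K (fun i => f i ^+ r) (t ^+ r).
Proof.
move=> h; elim: r => [|r IH].
  by under eq_fun do rewrite expr0; rewrite expr0; apply: graded1.
by under eq_fun do rewrite exprSr; rewrite exprSr; apply: gradedM.
Qed.

Lemma graded_lin K (a b g : R) : graded K (fun i => lin a (b + g * i%:R)) (lin a g).
Proof.
exists (fun s => if s == 0%N then a%:P else if s == 1%N then b%:P + g *: 'X else 0).
rewrite /lin => s sK; case: s sK => [|[|s]] sK /=; split.
- exact: leq_trans (size_polyC_leq1 _) _.
- by rewrite !coefD !coefC !coefZ coefX mulr0 addr0.
- by move=> i; rewrite hornerC !coefD !coefC !coefZ coefX mulr0 addr0.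
- apply: (leq_trans (size_polyD _ _)).
  rewrite geq_max (leq_trans (size_polyC_leq1 _)) //.
  by rewrite (leq_trans (size_scale_leq _ _)) // size_polyX.
- by rewrite !coefD !coefC !coefZ coefX /= add0r.
- by move=> i; rewrite !hornerE !coefD !coefC !coefZ coefX /= add0r mulr1.
- by rewrite size_poly0.
- by rewrite coef0 !coefD !coefC !coefZ coefX /= mulr0 addr0.
- by move=> i; rewrite horner0 !coefD !coefC !coefZ coefX /= mulr0 addr0.
Qed.

Lemma graded_prod_lin K L (A B G : nat -> R) :
  graded K (fun i => \prod_(t < L) lin (A t) (B t + G t * i%:R))
           (\prod_(t < L) lin (A t) (G t)).
Proof. exact: graded_prod (fun t => graded_lin K (A t) (B t) (G t)). Qed.

End GradedFamilies.

Section FiniteDifferences.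
Variable R : comNzRingType.

Definition altbin_pow n m (x : R) :=
  \sum_(i < n.+1) (-1) ^+ i * ('C(n, i))%:R * (i%:R + x) ^+ m.

Lemma altbin_pow0 n x : altbin_pow n 0 x = (n == 0%N)%:R.
Proof.
rewrite (_ : (n == 0%N)%:R = (0 : R) ^+ n); last by case: n => [|n]; rewrite ?expr0n.
rewrite -(subrr (1 : R)) exprBn /altbin_pow.
by apply: eq_bigr => i _; rewrite expr0 !expr1n !mulr1 mulr_natr.
Qed.

Lemma altbin_powSS n m x :
  altbin_pow n.+1 m.+1 x = - (n.+1)%:R * altbin_pow n m (x + 1) + x * altbin_pow n.+1 m x.
Proof.
rewrite /altbin_pow.
have eA (i : 'I_n.+2) : (-1) ^+ i * ('C(n.+1, i))%:R * (i%:R + x) ^+ m.+1 =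
    (-1) ^+ i * ('C(n.+1, i))%:R * i%:R * (i%:R + x) ^+ m +
    x * ((-1) ^+ i * ('C(n.+1, i))%:R * (i%:R + x) ^+ m).
  by rewrite exprS; ring.
rewrite (eq_bigr _ (fun i _ => eA i)) big_split /= -mulr_sumr; congr (_ + _).
rewrite big_ord_recl /= mulr0 mul0r add0r mulr_sumr; apply: eq_bigr => j _.
rewrite /bump /= add1n.
have hC : ('C(n.+1, j.+1))%:R * (j.+1)%:R = (n.+1)%:R * ('C(n, j))%:R :> R.
  by rewrite -!natrM mulnC mul_bin_diag.
rewrite (_ : (j.+1)%:R + x = j%:R + (x + 1)); last by rewrite -addn1 natrD; ring.
transitivity ((-1) ^+ j * (-1) * (('C(n.+1, j.+1))%:R * (j.+1)%:R) *
    (j%:R + (x + 1)) ^+ m); first by rewrite exprSr; ring.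
by rewrite hC; ring.
Qed.

Lemma altbin_pow_le m n x : (m <= n)%N ->
  altbin_pow n m x = if m == n then (-1) ^+ n * (n`!)%:R else 0.
Proof.
elim: m n x => [|m IH] n x le.
  by rewrite altbin_pow0; case: n le => [|n] _ //=; rewrite expr0 mul1r.
case: n le => [|n] // le.
rewrite altbin_powSS !IH //; last exact: ltnW.
case: (ltngtP m n) le => h le'.
- rewrite eqSS !ifF ?mulr0 ?addr0 //; apply/negbTE; rewrite neq_ltn ?h //.
  by rewrite ltnS ltnW.
- by rewrite ltnS leqNgt h in le'.
- rewrite h eqxx ifF ?mulr0 ?addr0; last by apply/negbTE; rewrite neq_ltn ltnSn.
  by rewrite factS natrM exprS; ring.
Qed.

Lemma altbin_horner n (q : {poly R}) : (size q <= n.+1)%N ->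
  \sum_(i < n.+1) (-1) ^+ i * ('C(n, i))%:R * q.[i%:R] = (-1) ^+ n * (n`!)%:R * q`_n.
Proof.
move=> sq.
transitivity (\sum_(m < n.+1) q`_m * altbin_pow n m 0).
  rewrite /altbin_pow.
  under eq_bigr do rewrite (horner_coef_wide _ sq) mulr_sumr.
  rewrite exchange_big /=; apply: eq_bigr => m _; rewrite mulr_sumr.
  by apply: eq_bigr => i _; rewrite addr0; ring.
rewrite big_ord_recr /= big1 ?add0r; first by rewrite altbin_pow_le // eqxx; ring.
move=> m _; rewrite altbin_pow_le ?ifF ?mulr0 //; last exact: ltnW.
by apply/negbTE; rewrite neq_ltn ltn_ord.
Qed.

End FiniteDifferences.

Section Truncation.
Variable R : comNzRingType.
Local Notation P := {poly R}.

Definition eqmodX k (p q : P) := forall j, (j < k)%N -> p`_j = q`_j.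

Lemma eqmodX_sym k p q : eqmodX k p q -> eqmodX k q p.
Proof. by move=> h j hj; rewrite h. Qed.

Lemma eqmodX_trans k p q r : eqmodX k p q -> eqmodX k q r -> eqmodX k p r.
Proof. by move=> h1 h2 j hj; rewrite h1 ?h2. Qed.

Lemma eqmodXMr k p q r : eqmodX k p q -> eqmodX k (p * r) (q * r).
Proof.
move=> h j hj; rewrite !coefM; apply: eq_bigr => i _; rewrite h //.
by apply: leq_ltn_trans hj; rewrite -ltnS.
Qed.

Lemma eqmodX_prod1 k L (F : 'I_L -> P) :
  (forall t, eqmodX k (F t) 1) -> eqmodX k (\prod_(t < L) F t) 1.
Proof.
elim: L F => [|L IH] F h; first by rewrite big_ord0.
rewrite big_ord_recr /= -[X in eqmodX _ _ X](mul1r (1 : P)).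
apply: (eqmodX_trans (eqmodXMr _ (IH _ (fun t => h _)))).
by rewrite !mul1r.
Qed.

Lemma eqmodX_1BXn k (g : R) : eqmodX k (1 - lin 0 g ^+ k) 1.
Proof.
move=> j hj; rewrite coefB /lin add0r exprZn coefZ coefXn.
by rewrite (_ : (j == k) = false) ?mulr0 ?subr0 //; apply/negbTE; rewrite neq_ltn hj.
Qed.

End Truncation.

Lemma lin_geomM (R : fieldType) N (c b g : R) : c != 0 -> g * c = - b ->
  lin c b * \sum_(r < N) c^-1 *: lin 0 g ^+ r = 1 - lin 0 g ^+ N.
Proof.
move=> c0 e.
have -> : lin c b = c *: (1 - lin 0 g).
  by rewrite /lin add0r scalerBr alg_polyC scalerA mulrC e scaleNr opprK.
rewrite -scaler_sumr -scalerAl -scalerAr scalerA mulfV // scale1r.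
have := subrXX (1 : {poly R}) (lin 0 g) N; rewrite expr1n => ->.
by congr (_ * _); apply: eq_bigr => r _; rewrite expr1n mul1r.
Qed.

Section Substitution.
Variables (R : comNzRingType) (c : R).
Local Notation P := {poly R}.

(* [hsub D p] is (1 + X)^D p(cX / (1 + X)) for size p <= D + 1, written without
   division; [hlin a b] is the image of the factor [lin a b]. *)
Definition hsub (D : nat) (p : P) : P :=
  \sum_(m < D.+1) p`_m *: ((c *: 'X) ^+ m * (1 + 'X) ^+ (D - m)).

Definition hlin (a b : R) : P := a *: (1 + 'X) + (b * c) *: 'X.

Lemma hsubD D (p q : P) : hsub D (p + q) = hsub D p + hsub D q.
Proof. by rewrite /hsub -big_split /=; apply: eq_bigr => m _; rewrite coefD scalerDl. Qed.

Lemma hsubZ D a (p : P) : hsub D (a *: p) = a *: hsub D p.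
Proof. by rewrite /hsub scaler_sumr; apply: eq_bigr => m _; rewrite coefZ scalerA. Qed.

Lemma hsub1 D : hsub D 1 = (1 + 'X) ^+ D.
Proof.
rewrite /hsub big_ord_recl /= coef1 eqxx scale1r expr0 mul1r subn0 big1 ?addr0 //.
by move=> m _; rewrite coef1 /= scale0r.
Qed.

Lemma hsubS D (p : P) : (size p <= D.+1)%N -> hsub D.+1 p = (1 + 'X) * hsub D p.
Proof.
move=> sp; rewrite /hsub big_ord_recr /= [p`__]nth_default // scale0r addr0.
rewrite mulr_sumr; apply: eq_bigr => m _; rewrite -scalerAr.
congr (_ *: _); rewrite mulrCA; congr (_ * _).
by rewrite subSn ?exprS // -ltnS.
Qed.

Lemma hsubXM D (p : P) : hsub D.+1 ('X * p) = (c *: 'X) * hsub D p.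
Proof.
rewrite /hsub big_ord_recl /= coefXM eqxx scale0r add0r mulr_sumr.
apply: eq_bigr => m _; rewrite -scalerAr coefXM /= /bump /= add1n.
by congr (_ *: _); rewrite exprS subSS mulrA.
Qed.

Lemma hsub_linM D (p : P) a b : (size p <= D.+1)%N ->
  hsub D.+1 (lin a b * p) = hlin a b * hsub D p.
Proof.
move=> sp; have -> : lin a b * p = a *: p + b *: ('X * p).
  by rewrite /lin mulrDl mul_polyC -scalerAl.
rewrite hsubD !hsubZ hsubS // hsubXM /hlin.
by rewrite !scalerAl scalerA -mulrDl.
Qed.

Lemma size_linM a b (p : P) : (size (lin a b * p)%R <= (size p).+1)%N.
Proof.
apply: (leq_trans (size_polyMleq _ _)).
have : (size (lin a b) <= 2)%N.
  apply: (leq_trans (size_polyD _ _)); rewrite geq_max (leq_trans (size_polyC_leq1 _)) //.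
  by apply: (leq_trans (size_scale_leq _ _)); rewrite size_polyX.
case: (size (lin a b)) => [|[|[|]]] //=; lia.
Qed.

Lemma size_prod_linM n (A B : nat -> R) D (p : P) : (size p <= D.+1)%N ->
  (size ((\prod_(t < n) lin (A t) (B t)) * p)%R <= (n + D).+1)%N.
Proof.
elim: n A B => [|n IH] A B sp; first by rewrite big_ord0 mul1r.
rewrite big_ord_recl -mulrA.
apply: (leq_trans (size_linM _ _ _)); rewrite addSn ltnS.
exact: (IH (fun t => A t.+1) (fun t => B t.+1)).
Qed.

Lemma hsub_prod_linM n (A B : nat -> R) D (p : P) : (size p <= D.+1)%N ->
  hsub (n + D) ((\prod_(t < n) lin (A t) (B t)) * p) =
  (\prod_(t < n) hlin (A t) (B t)) * hsub D p.
Proof.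
elim: n A B => [|n IH] A B sp; first by rewrite !big_ord0 !mul1r.
rewrite !big_ord_recl -mulrA addSn.
rewrite hsub_linM; last exact: (size_prod_linM _ (fun t => A t.+1) (fun t => B t.+1)).
by rewrite (IH (fun t => A t.+1) (fun t => B t.+1)) // mulrA.
Qed.

Lemma coef_1DX_exp N j : ((1 + 'X : P) ^+ N)`_j = ('C(N, j))%:R.
Proof.
elim: N j => [|N IH] j; first by rewrite expr0 coef1 bin0n.
rewrite exprS mulrDl mul1r coefD coefXM IH; case: j => [|j] /=.
  by rewrite addr0 !bin0.
by rewrite IH binS natrD addrC.
Qed.

Lemma coef_hsub D (p : P) j : (hsub D p)`_j =
  \sum_(m < D.+1 | (m <= j)%N) p`_m * ((c *: 'X) ^+ m * (1 + 'X) ^+ (D - m))`_j.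
Proof.
rewrite /hsub coef_sum (bigID (fun m : 'I_D.+1 => (m <= j)%N)) /= [X in _ + X]big1 ?addr0.
  by apply: eq_bigr => m _; rewrite coefZ.
move=> m; rewrite -ltnNge => h; rewrite coefZ exprZn -scalerAl coefZ coefXnM h.
by rewrite !mulr0.
Qed.

(* The coefficient of X^(k-1) in hsub (2k) p / (1 + X)^2.  By [resid_Xn_prod] it
   is c^(2k-1) times the coefficient of X^(k-1) in the power series p / (c - X)^k. *)
Definition resid k (p : P) : R :=
  \sum_(j < k) (-1) ^+ (k.-1 - j) * (k - j)%:R * (hsub (k + k) p)`_j.

Lemma resid_eq k (p q : P) : eqmodX k p q -> resid k p = resid k q.
Proof.
move=> e; rewrite /resid; apply: eq_bigr => j _; congr (_ * _).
rewrite !coef_hsub; apply: eq_bigr => m mj; rewrite e //.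
exact: leq_ltn_trans mj _.
Qed.

Lemma residZ k a (p : P) : resid k (a *: p) = a * resid k p.
Proof. by rewrite /resid mulr_sumr; apply: eq_bigr => j _; rewrite hsubZ coefZ; ring. Qed.

Lemma resid_sum k n (F : 'I_n -> P) : resid k (\sum_(i < n) F i) = \sum_(i < n) resid k (F i).
Proof.
elim: n F => [|n IH] F; first by rewrite !big_ord0 -(scale0r 0) residZ mul0r.
rewrite !big_ord_recr /= -IH /resid -big_split /=.
by apply: eq_bigr => j _; rewrite hsubD coefD mulrDr.
Qed.

Lemma sum_altbin_weighted N :
  \sum_(l < N.+1) (-1) ^+ (N - l) * (N.+1 - l)%:R * ('C(N.+1, l))%:R = (N == 0%N)%:R :> R.
Proof.
transitivity ((N.+1)%:R * \sum_(l < N.+1) (-1) ^+ (N - l) * ('C(N, l))%:R : R).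
  rewrite mulr_sumr; apply: eq_bigr => l _.
  rewrite -mulrA -natrM -mul_bin_down natrM; ring.
rewrite (_ : \sum_(l < N.+1) _ = 0 ^+ N).
  by case: N => [|N]; rewrite ?expr0 ?mulr1 // expr0n mulr0.
have := exprDn (-1 : R) 1 N; rewrite addNr => ->.
by apply: eq_bigr => l _; rewrite expr1n mulr1 mulr_natr.
Qed.

Lemma hsub_Xn_prod k a : (a <= k)%N ->
  hsub (k + k) ('X^a * \prod_(t < k) lin c (-1)) =
  c ^+ (a + k) *: ('X^a * (1 + 'X) ^+ (k - a)).
Proof.
move=> ak.
have lin01 : lin 0 1 = 'X :> P by rewrite /lin scale1r add0r.
have hlin01 : hlin 0 1 = c *: 'X by rewrite /hlin scale0r add0r mul1r.
have hlinc : hlin c (-1) = c%:P.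
  by rewrite /hlin scalerDr mulN1r scaleNr addrK -mul_polyC mulr1.
have sz1 : (size (1%R : P) <= (k - a).+1)%N by rewrite size_poly1.
have eX : 'X^a = \prod_(t < a) lin 0 1 :> P by rewrite lin01 prodr_const card_ord.
rewrite eX -[X in _ * X]mulr1.
rewrite (_ : (k + k = a + (k + (k - a)))%N); last by lia.
have := hsub_prod_linM a (fun _ => 0) (fun _ => 1)
  (size_prod_linM k (fun _ => c) (fun _ => -1) sz1) => /= ->.
have := hsub_prod_linM k (fun _ => c) (fun _ => -1) sz1 => /= ->.
rewrite hsub1 hlin01 hlinc.
rewrite !prodr_const !card_ord exprZn -polyC_exp mul_polyC.
by rewrite -scalerAl -scalerAr scalerA -exprD lin01.
Qed.

Lemma resid_Xn_prod k a : (a < k)%N ->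
  resid k ('X^a * \prod_(t < k) lin c (-1)) = (a == k.-1)%:R * c ^+ (a + k).
Proof.
move=> ak; rewrite /resid.
under eq_bigr do rewrite hsub_Xn_prod ?(ltnW ak) // coefZ coefXnM.
have [N eN] : exists N, k = (a + N.+1)%N by exists (k - a).-1; lia.
rewrite eN big_split_ord /= big1 ?add0r; last first.
  by move=> j _; rewrite /= ltn_ord mulr0 mulr0.
have -> : (a == (a + N.+1).-1) = (N == 0%N) by apply/eqP/eqP; lia.
rewrite -sum_altbin_weighted mulr_suml; apply: eq_bigr => l _ /=.
rewrite (_ : (a + l < a)%N = false); last by lia.
rewrite coef_1DX_exp.
rewrite (_ : ((a + N.+1).-1 - (a + l) = N - l)%N); last by lia.
rewrite (_ : ((a + N.+1) - (a + l) = N.+1 - l)%N); last by lia.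
rewrite (_ : ((a + N.+1) - a = N.+1)%N); last by lia.
rewrite (_ : ((a + l) - a = l)%N); last by lia.
ring.
Qed.

Lemma resid_prod_lin k (p : P) : (0 < k)%N ->
  resid k (p * \prod_(t < k) lin c (-1)) = c ^+ (k.-1 + k) * p`_k.-1.
Proof.
case: k => // k _ /=.
have trunc : eqmodX k.+1 (\sum_(a < k.+1) p`_a *: 'X^a) p.
  by rewrite -poly_def => j hj; rewrite -/(take_poly _ _) coef_take_poly hj.
rewrite -(resid_eq (eqmodXMr _ trunc)) mulr_suml resid_sum.
rewrite (eq_bigr (fun a : 'I_k.+1 => p`_a * resid k.+1 ('X^a * \prod_(t < k.+1) lin c (-1))));
  last by move=> a _; rewrite -scalerAl residZ.
under eq_bigr do rewrite resid_Xn_prod //.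
rewrite big_ord_recr /= eqxx mul1r [RHS]mulrC big1 ?add0r // => a _.
rewrite (_ : (_ == _) = false) ?mul0r ?mulr0 //.
by apply/negbTE; rewrite neq_ltn /= ltn_ord.
Qed.

End Substitution.

Section Positivity.
Variables (R : realDomainType) (c : R).
Local Notation P := {poly R}.

Definition alternating (p : P) := forall j, 0 <= (-1) ^+ j * p`_j.

Lemma alternatingM p q : alternating p -> alternating q -> alternating (p * q).
Proof.
move=> hp hq j; rewrite coefM mulr_sumr; apply: sumr_ge0 => i _.
have e : (-1) ^+ j = (-1) ^+ i * (-1) ^+ (j - i) :> R.
  by rewrite -exprD subnKC // -ltnS.
by rewrite e mulrACA; apply: mulr_ge0.
Qed.

Lemma hlinE a b : hlin c a b = a%:P + (a + b * c) *: 'X.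
Proof. by rewrite /hlin scalerDr -mul_polyC mulr1 scalerDl addrA. Qed.

Lemma alternating_prod_hlin n (A B : nat -> R) : (forall t, 0 <= A t) ->
  (forall t, A t + B t * c <= 0) ->
  alternating (\prod_(t < n) hlin c (A t) (B t)) /\
  (\prod_(t < n) hlin c (A t) (B t))`_0 = \prod_(t < n) A t.
Proof.
move=> hA hB; elim: n => [|n [IH1 IH2]].
  by rewrite !big_ord0 coef1; split=> // -[|j]; rewrite coef1 /= ?expr0 ?mulr1 ?mulr0.
rewrite !big_ord_recr /= coef0M IH2 hlinE coefD coefC coefZ coefX /= mulr0 addr0.
split=> //; apply: alternatingM => // -[|[|j]];
  rewrite coefD coefC coefZ coefX /= ?mulr0 ?addr0 ?expr0 ?mul1r ?add0r ?mulr1 //.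
  by rewrite expr1 mulN1r oppr_ge0.
by rewrite mulr0.
Qed.

(* The weights are those of 1/(1 + X)^2; against an alternating B the sum has the
   sign of its first term. *)
Lemma weighted_altsum_gt0 k (B : P) : (0 < k)%N -> alternating B -> 0 < B`_0 ->
  0 < (-1) ^+ k.-1 * \sum_(j < k) (-1) ^+ (k.-1 - j) * (k - j)%:R * B`_j.
Proof.
case: k => // k _ hB h0 /=.
have e (j : 'I_k.+1) : (-1) ^+ k * ((-1) ^+ (k - j) * (k.+1 - j)%:R * B`_j) =
    (k.+1 - j)%:R * ((-1) ^+ j * B`_j).
  have hj : (j <= k)%N by rewrite -ltnS.
  have sgn : (-1) ^+ k * (-1) ^+ (k - j) = (-1) ^+ j :> R.
    by rewrite -{1}(subnKC hj) exprD -mulrA -expr2 sqrr_sign mulr1.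
  by rewrite -sgn; ring.
rewrite mulr_sumr (eq_bigr _ (fun j _ => e j)) big_ord_recl /= subn0 expr0 mul1r.
apply: (lt_le_trans (_ : 0 < (k.+1)%:R * B`_0)); first by rewrite mulr_gt0.
by rewrite lerDl; apply: sumr_ge0 => i _; apply: mulr_ge0.
Qed.

Lemma resid_prod_lin_gt0 k (d : R) : (0 < k)%N -> 1 <= c -> 0 < d -> d <= c ->
  0 < (-1) ^+ k.-1 * resid c k (\prod_(t < k) lin 1 (-1) * \prod_(t < k) lin d (-1)).
Proof.
move=> k0 c1 d0 dc; rewrite /resid -[X in hsub _ _ X]mulr1 -mulrA.
have sz1 : (size (1%R : P) <= 1)%N by rewrite size_poly1.
rewrite (_ : (k + k = k + (k + 0))%N); last by rewrite addn0.
have := hsub_prod_linM c k (fun _ => 1) (fun _ => -1)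
  (size_prod_linM k (fun _ => d) (fun _ => -1) sz1) => /= ->.
have := hsub_prod_linM c k (fun _ => d) (fun _ => -1) sz1 => /= ->.
rewrite hsub1 expr0 mulr1.
have [alt1 coef01] : alternating (\prod_(t < k) hlin c 1 (-1)) /\
    (\prod_(t < k) hlin c 1 (-1))`_0 = \prod_(t < k) (1 : R).
  by apply: (@alternating_prod_hlin k (fun _ => 1) (fun _ => -1)) => t; lra.
have [alt2 coef02] : alternating (\prod_(t < k) hlin c d (-1)) /\
    (\prod_(t < k) hlin c d (-1))`_0 = \prod_(t < k) d.
  by apply: (@alternating_prod_hlin k (fun _ => d) (fun _ => -1)) => t; lra.
apply: weighted_altsum_gt0 => //; first exact: alternatingM.
by rewrite coef0M coef01 coef02 !prodr_const !card_ord expr1n mul1r exprn_gt0.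
Qed.

End Positivity.

Section Reversal.
Variable R : comNzRingType.
Local Notation P := {poly R}.

Definition rev_at D (p r : P) :=
  [/\ (size p <= D.+1)%N, (size r <= D.+1)%N & forall s, (s <= D)%N -> p`_(D - s) = r`_s].

Lemma rev_at1 : rev_at 0 1 1.
Proof. by split; rewrite ?size_poly1 // => s; rewrite leqn0 => /eqP ->. Qed.

Lemma rev_at_linM D p r a b : rev_at D p r -> rev_at D.+1 (lin b a * p) (lin a b * r).
Proof.
case=> sp sr e; split; try exact: leq_trans (size_linM _ _ _) _.
have linM x y (q : P) : lin x y * q = x *: q + y *: ('X * q).
  by rewrite /lin mulrDl mul_polyC -scalerAl.
move=> s hs; rewrite !linM !coefD !coefZ !coefXM.
case: s hs => [|s] hs.
  by rewrite subn0 /= [p`_D.+1]nth_default // -e // subn0 mulr0 addr0 add0r.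
rewrite subSS; case: (ltnP s D) => h.
  rewrite ifF; last by apply/negbTE; rewrite subn_eq0 -ltnNge.
  rewrite (e s (ltnW h)) (_ : ((D - s)%N).-1 = (D - s.+1)%N); last by lia.
  by rewrite e // addrC.
have -> : s = D by lia.
by rewrite (e D (leqnn D)) subnn /= [r`_D.+1]nth_default // !mulr0 add0r addr0.
Qed.

Lemma rev_at_prod_linM L (A B : nat -> R) D p r : rev_at D p r ->
  rev_at (L + D) ((\prod_(t < L) lin (B t) (A t)) * p) ((\prod_(t < L) lin (A t) (B t)) * r).
Proof.
elim: L A B => [|L IH] A B h; first by rewrite !big_ord0 !mul1r.
rewrite !big_ord_recl -!mulrA addSn; apply: rev_at_linM.
exact: (IH (fun t => A t.+1) (fun t => B t.+1)).
Qed.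

End Reversal.

Lemma zprod_ord (R : nzRingType) (F : int -> R) (m : int) (L : nat) :
  zprod m (m + L%:Z - 1) F = \prod_(t < L) F (m + t%:Z).
Proof.
rewrite /zprod; case: L => [|L].
  by rewrite ifF ?big_ord0 //; apply/negbTE; rewrite -ltNge; lia.
by rewrite ifT; [have -> : m + L.+1%:Z - 1 - m + 1 = L.+1%:Z by lia | lia].
Qed.

Lemma eq_zprod (R : nzRingType) (F G : int -> R) m m' :
  F =1 G -> zprod m m' F = zprod m m' G.
Proof. by move=> e; rewrite /zprod; case: ifP => // _; apply: eq_bigr => t _. Qed.

Section Summands.
Variables (R : realType) (a0 a1 b0 b1 : R) (n : nat).
Local Notation P := {poly R}.

(* With k = n + 1 the factors of the paper read
   2N + a(N) + b(N) + j - 2 = cS N + oS + j and N + a(N) + j - 1 = cA N + oA + j. *)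
Definition cS := 2 + a1 + b1.
Definition oS := a0 + b0 - 2.
Definition cA := 1 + a1.
Definition oA := a0 - 1.

Definition Sfac (j : int) : P := lin (oS + j%:~R) cS.

Definition summand (i : nat) : P :=
  (\prod_(t < n - i) Sfac (- n%:Z + t%:Z)) *
  (\prod_(t < n.+1) lin (- i%:Z + t%:Z)%:~R 1) *
  (\prod_(t < n.+1) lin (oA + (- i%:Z + t%:Z)%:~R) cA) *
  (\prod_(t < i) Sfac (n.+1%:Z - i%:Z + t%:Z)).

Lemma calN_summands : calN a0 a1 b0 b1 n.+1 =
  \sum_(i < n.+1) ((-1) ^+ i * ('C(n, i))%:R) *: summand i.
Proof.
rewrite /calN /=; apply: eq_bigr => i _.
have eS (j : int) : 2%:R * 'X + (a1%:P * 'X + a0%:P) + (b1%:P * 'X + b0%:P) + j%:~R - 2%:R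
    = Sfac j.
  rewrite /Sfac /lin /cS /oS -mul_polyC !polyCD polyCN -(rmorph_int (@polyC R)).
  by rewrite (_ : (2 : R)%:P = 2) ?polyC_natr //; ring.
have eM (j : int) : ('X + j%:~R) * ('X + (a1%:P * 'X + a0%:P) + j%:~R - 1) =
    lin j%:~R 1 * lin (oA + j%:~R) cA.
  rewrite /lin /cA /oA scale1r -mul_polyC !polyCD polyCN.
  by rewrite -(rmorph_int (@polyC R)); ring.
rewrite !(eq_zprod _ _ eS) (eq_zprod _ _ eM).
have ilt := ltn_ord i.
rewrite (_ : - (n.+1)%:Z + 1 = - n%:Z); last by lia.
rewrite (_ : - (i : nat)%:Z - 1 = - n%:Z + (n - i)%N%:Z - 1); last by lia.
rewrite (_ : (n.+1)%:Z - 1 - (i : nat)%:Z = - (i : nat)%:Z + (n.+1)%:Z - 1); last by lia.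
rewrite (_ : (n.+1)%:Z - 1 = (n.+1)%:Z - (i : nat)%:Z + (i : nat)%:Z - 1); last by lia.
rewrite !zprod_ord big_split /= /summand -mul_polyC.
rewrite polyCM polyC_exp polyCN polyC1 polyC_natr !mulrA.
by congr (_ * _ * _ * _ * _).
Qed.

Definition rSfac (j : int) : P := lin cS (oS + j%:~R).
Definition rlin1 (i : nat) : P := \prod_(t < n.+1) lin 1 (- i%:Z + t%:Z)%:~R.
Definition rlin2 (i : nat) : P := \prod_(t < n.+1) lin cA (oA + (- i%:Z + t%:Z)%:~R).

Definition rsummand (i : nat) : P :=
  (\prod_(t < n - i) rSfac (- n%:Z + t%:Z)) * rlin1 i * rlin2 i *
  (\prod_(t < i) rSfac (n.+1%:Z - i%:Z + t%:Z)).

Lemma rev_at_summand i : (i <= n)%N -> rev_at (3 * n + 2) (summand i) (rsummand i).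
Proof.
move=> hi.
have h1 := rev_at_prod_linM i (fun _ => cS) (fun t => oS + (n.+1%:Z - i%:Z + t%:Z)%:~R)
  (rev_at1 R).
have h2 := rev_at_prod_linM n.+1 (fun _ => cA) (fun t => oA + (- i%:Z + t%:Z)%:~R) h1.
have h3 := rev_at_prod_linM n.+1 (fun _ => 1) (fun t => (- i%:Z + t%:Z)%:~R) h2.
have h4 := rev_at_prod_linM (n - i) (fun _ => cS) (fun t => oS + (- n%:Z + t%:Z)%:~R) h3.
rewrite (_ : (3 * n + 2 = n - i + (n.+1 + (n.+1 + (i + 0))))%N); last by lia.
by rewrite /summand /rsummand /rlin1 /rlin2 /Sfac /rSfac !mulrA !mulr1 in h4 *.
Qed.

Lemma size_calN_leq : (size (calN a0 a1 b0 b1 n.+1) <= (3 * n + 2).+1)%N.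
Proof.
rewrite calN_summands; apply: size_sum_leq => i.
apply: (leq_trans (size_scale_leq _ _)).
by have [] := rev_at_summand (ltnSE (ltn_ord i)).
Qed.

Lemma coef_calN_rsummand s : (s <= 3 * n + 2)%N ->
  (calN a0 a1 b0 b1 n.+1)`_(3 * n + 2 - s) =
  \sum_(i < n.+1) (-1) ^+ i * ('C(n, i))%:R * (rsummand i)`_s.
Proof.
move=> hs; rewrite calN_summands coef_sum; apply: eq_bigr => i _.
by rewrite coefZ; have [_ _ ->] := rev_at_summand (ltnSE (ltn_ord i)).
Qed.

Definition rfull : P := \prod_(t < n + n.+1) rSfac (- n%:Z + t%:Z).
Definition rmissing (i : nat) : P := \prod_(t < n.+1) rSfac (- i%:Z + t%:Z).

Lemma rsummandM_missing i : (i <= n)%N -> rsummand i * rmissing i = rfull * rlin1 i * rlin2 i.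
Proof.
move=> hi.
have -> : rfull = (\prod_(t < n - i) rSfac (- n%:Z + t%:Z)) * rmissing i *
    (\prod_(t < i) rSfac (n.+1%:Z - i%:Z + t%:Z)).
  rewrite /rfull /rmissing (_ : (n + n.+1 = (n - i) + (n.+1 + i))%N); last by lia.
  rewrite big_split_ord big_split_ord -mulrA.
  by congr (_ * (_ * _)); apply: eq_bigr => t _; congr rSfac; rewrite /=; lia.
by rewrite /rsummand; ring.
Qed.

(* [geom t i] inverts the factor [rSfac (t - i)] of [rmissing i] modulo X^(n+1). *)
Definition geom (t i : nat) : P :=
  \sum_(r < n.+1) cS^-1 *: lin 0 (- (oS + t%:R) / cS + cS^-1 * i%:R) ^+ r.
Definition rapprox (i : nat) : P := rfull * rlin1 i * rlin2 i * \prod_(t < n.+1) geom t i.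

Lemma eqmodX_rsummand i : cS != 0 -> (i <= n)%N -> eqmodX n.+1 (rsummand i) (rapprox i).
Proof.
move=> cS0 hi.
have inv : eqmodX n.+1 (rmissing i * \prod_(t < n.+1) geom t i) 1.
  rewrite /rmissing -big_split /=; apply: eqmodX_prod1 => t.
  rewrite /rSfac /geom lin_geomM //; first exact: eqmodX_1BXn.
  by rewrite intrD intrN; field.
rewrite /rapprox -rsummandM_missing // -mulrA.
apply: eqmodX_sym; rewrite mulrC -[X in eqmodX _ _ X]mul1r.
exact: eqmodXMr.
Qed.

(* [symbol] is c^(2n+1) (1 - X)^(n+1) (cA - X)^(n+1) / (cS - X)^(n+1) modulo X^(n+1). *)
Definition geom_top : P := \sum_(r < n.+1) cS^-1 *: lin 0 cS^-1 ^+ r.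
Definition symbol : P := (\prod_(t < n + n.+1) lin cS 0) * (\prod_(t < n.+1) lin 1 (-1)) *
   (\prod_(t < n.+1) lin cA (-1)) * \prod_(t < n.+1) geom_top.

Lemma graded_rapprox : graded n.+1 rapprox symbol.
Proof.
apply: gradedM; [apply: gradedM; [apply: gradedM|]|].
- have h := graded_prod_lin n.+1 (n + n.+1) (fun _ => cS)
    (fun t => oS + (- n%:Z + t%:Z)%:~R) (fun _ => 0).
  by apply: graded_eq h => i s _; rewrite /rfull /rSfac; under eq_bigr do rewrite mul0r addr0.
- have h := graded_prod_lin n.+1 n.+1 (fun _ => 1 : R) (fun t => t%:R) (fun _ => -1).
  apply: graded_eq h => i s _; congr (_`_s).
  rewrite (eq_bigr (fun t : 'I_n.+1 => lin 1 (- i%:Z + t%:Z)%:~R)) // => t _.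
  by congr lin; rewrite intrD intrN; ring.
- have h := graded_prod_lin n.+1 n.+1 (fun _ => cA) (fun t => oA + t%:R) (fun _ => -1).
  apply: graded_eq h => i s _; congr (_`_s).
  rewrite (eq_bigr (fun t : 'I_n.+1 => lin cA (oA + (- i%:Z + t%:Z)%:~R))) // => t _.
  by congr lin; rewrite intrD intrN; ring.
- apply: graded_prod => t; apply: graded_sum => r; apply/gradedZ/graded_exp.
  exact: graded_lin n.+1 0 (- (oS + t%:R) / cS) cS^-1.
Qed.

Lemma coef_symbol : cS != 0 ->
  symbol`_n = resid cS n.+1 (\prod_(t < n.+1) lin 1 (-1) * \prod_(t < n.+1) lin cA (-1)).
Proof.
move=> cS0; set G := _ * _.
set psi : P := \prod_(t < n.+1) lin cS (-1).
have lin_c0 : \prod_(t < n + n.+1) lin cS 0 = (cS ^+ (n + n.+1))%:P.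
  by rewrite /lin scale0r addr0 prodr_const card_ord polyC_exp.
have trunc : eqmodX n.+1 (symbol * psi) (cS ^+ (n + n.+1) *: G).
  have -> : symbol * psi =
      (cS ^+ (n + n.+1))%:P * G * \prod_(t < n.+1) (geom_top * lin cS (-1)).
    by rewrite /symbol /psi /G big_split /= -lin_c0; ring.
  rewrite -mul_polyC -[X in eqmodX _ _ X]mulr1.
  rewrite [X in eqmodX _ X _]mulrC [X in eqmodX _ _ X]mulrC; apply: eqmodXMr.
  apply: eqmodX_prod1 => t; rewrite mulrC lin_geomM //; first exact: eqmodX_1BXn.
  by rewrite mulVf // opprK.
apply: (mulIf (expf_neq0 (n + n.+1) cS0)).
by rewrite [RHS]mulrC -residZ -(resid_eq _ trunc) resid_prod_lin // mulrC.
Qed.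

Lemma coef_calN_top s : cS != 0 -> (s <= n)%N ->
  (calN a0 a1 b0 b1 n.+1)`_(3 * n + 2 - s) =
  if s == n then (-1) ^+ n * (n`!)%:R * symbol`_n else 0.
Proof.
move=> cS0 hs; have [Q HQ] := graded_rapprox; have [sQ tQ eQ] := HQ s hs.
rewrite coef_calN_rsummand; last by lia.
under eq_bigr => i _ do rewrite (eqmodX_rsummand cS0 (ltnSE (ltn_ord i))) // eQ.
rewrite altbin_horner; last exact: leq_trans sQ _.
case: eqP => [<-|/eqP ne]; first by rewrite tQ.
by rewrite [(Q s)`_n]nth_default ?mulr0 //; apply: leq_trans sQ _; rewrite ltn_neqAle ne.
Qed.

Lemma calN_deg : cS != 0 -> symbol`_n != 0 ->
  (size (calN a0 a1 b0 b1 n.+1)).-1 = (2 * n.+1)%N.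
Proof.
move=> cS0 top0; set p := calN _ _ _ _ _.
have p2k : p`_(2 * n.+1) != 0.
  rewrite (_ : (2 * n.+1 = 3 * n + 2 - n)%N); last by lia.
  by rewrite coef_calN_top // eqxx !mulf_neq0 ?signr_eq0 // pnatr_eq0 -lt0n fact_gt0.
have sz : (size p <= 3 * n + 3)%N by rewrite addn3 -addn2; exact: size_calN_leq.
suff -> : size p = (2 * n.+1).+1 by [].
apply/eqP; rewrite eqn_leq; apply/andP; split.
  apply/leq_sizeP => j hj; have [hbig|hsmall] := leqP (3 * n + 3) j.
    by rewrite nth_default //; apply: leq_trans sz hbig.
  have hj' : (j <= 3 * n + 2)%N by lia.
  rewrite -(subKn hj') coef_calN_top //; last by lia.
  by rewrite ifF //; apply/negbTE; lia.
by rewrite ltnNge; apply: contra p2k => /leq_sizeP ->.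
Qed.

End Summands.

Lemma slope_ge0 (R : archiRealFieldType) (a b : R) :
  (forall N : nat, (0 < N)%N -> 0 < a * N%:R + b) -> 0 <= a.
Proof.
move=> h; rewrite leNgt; apply/negP => aneg.
set x := b / - a; have bx : b = x * - a by rewrite divfK // oppr_eq0 lt_eqF.
have := h (Num.Def.truncn x).+1 isT; have := truncnS_gt x.
rewrite bx; set M := _%:R; nra.
Qed.

Theorem lemma2 (R : realType) (a0 a1 b0 b1 : R) (k : nat) :
  (forall N : nat, (0 < N)%N -> 0 < a1 * N%:R + a0) ->
  (forall N : nat, (0 < N)%N -> 0 < b1 * N%:R + b0) ->
  (1 <= k)%N ->
  (size (calN a0 a1 b0 b1 k)).-1 = (2 * k)%N.
Proof.
move=> ha hb; case: k => // n _.
have a1_ge0 := slope_ge0 ha; have b1_ge0 := slope_ge0 hb.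
have cS0 : cS a1 b1 != 0 by rewrite /cS; apply/eqP; lra.
apply: calN_deg => //; rewrite coef_symbol //.
have := @resid_prod_lin_gt0 R (cS a1 b1) n.+1 (cA a1) isT.
rewrite /cS /cA => /(_ ltac:(lra) ltac:(lra) ltac:(lra)) /= pos.
by apply: contraTneq pos => ->; rewrite mulr0 ltxx.
Qed.
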